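(* Assume $M$ has genus zero and $a\in(0,1)$, $b\in(0,1]$. Let $\alpha=\ln\big(\frac{1-a}{b}\big)$ and $\beta=\ln\big(1+\frac{q'a}{1-a}\big)$, and let $\tilde\mu$ be the probability measure on $(\mathrm s,\mathrm s')\in Q^{\mathsf V}\times Q'^{\mathsf V}$ given by $$\tilde\mu(\mathrm s,\mathrm s')\propto\exp\Big(\sum_{\{v_1,v_2\}\in\mathsf E}\delta_{\mathrm s(v_1),\mathrm s(v_2)}\big(\alpha+\beta\,\delta_{\mathrm s'(v_1),\mathrm s'(v_2)}\big)\Big),$$ where $\delta_{x,y}=1$ if $x=y$ and $0$ otherwise. Then the law of $\sigma$ under $\mathbf P$ equals the law of $\mathrm s$ under $\tilde\mu$.
   Context: $M$ is the sphere or the plane. Let $\mathsf G=(\mathsf V,\mathsf E)$ be a finite connected graph embedded in $M$ with all faces topological discs, and $\mathsf G^*=(\mathsf U,\mathsf E^* )$ its embedded dual ($\mathsf U$ = faces of $\mathsf G$); $e^*$ is the dual edge crossing $e$, $\xi^*=\{e^*:e\in\xi\}$. Fix integers $q,q'\ge1$ and finite $Q,Q'\subset\mathbb C$ with $Q=-Q$, $Q'=-Q'$, $|Q|=q$, $|Q'|=q'$. For $\sigma:\mathsf V\to Q$, $\eta(\sigma)\subseteq\mathsf E^*$ is the set of $e^*$ whose primal $e$ has endpoints with different $\sigma$-values; for $\sigma':\mathsf U\to Q'$, $\eta(\sigma')\subseteq\mathsf E$ is the set of $e$ whose dual $e^*$ has endpoints with different $\sigma'$-values. $\mathbf P(\sigma,\sigma')\propto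 a^{|\eta(\sigma')|}b^{|\eta(\sigma)|}$ on $\Sigma=\{(\sigma,\sigma')\in Q^{\mathsf V}\times Q'^{\mathsf U}:\eta(\sigma)^*\cap\eta(\sigma')=\emptyset\}$. *)

From mathcomp Require Import all_boot all_order all_algebra finmap fingroup perm.
From mathcomp Require Import complex.
From mathcomp Require Import all_classical all_reals all_analysis.

Set Implicit Arguments.
Unset Strict Implicit.
Unset Printing Implicit Defensive.

Import GRing.Theory Num.Theory.

(* A finite connected graph cellularly embedded in a closed orientable surface,
   given combinatorially as a rotation system (combinatorial map):
   - darts [dart]; [alpha] is the fixed-point-free involution exchanging the two
     darts (half-edges) of an edge; [rho] rotates the darts around their vertex;
   - vertices are the [rho]-orbits, edges the [alpha]-orbits, faces the orbits of
     [phi := rho \o alpha];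
   - vertex / edge / face types are given with the quotient maps [vert], [edge],
     [face], whose fibers are exactly the corresponding orbits.
   The dart [d] goes out of vertex [vert d] along edge [edge d] to vertex
   [vert (alpha d)]; the two faces incident to this edge (the endpoints of the
   dual edge) are [face d] and [face (alpha d)]. *)
Record emb_graph := EmbGraph {
  dart : finType;
  vtx : finType;
  edg : finType;
  fac : finType;
  alpha : {perm dart};
  rho : {perm dart};
  vert : dart -> vtx;
  edge : dart -> edg;
  face : dart -> fac;
  alpha_invol : forall d, alpha (alpha d) = d;
  alpha_nofix : forall d, alpha d != d;
  vert_surj : forall v, exists d, vert d = v;
  edge_surj : forall e, exists d, edge d = e;
  face_surj : forall f, exists d, face d = f;
  vert_fiber : forall d1 d2, vert d1 = vert d2 <-> fconnect rho d1 d2;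
  edge_fiber : forall d1 d2, edge d1 = edge d2 <-> fconnect alpha d1 d2;
  face_fiber : forall d1 d2,
    face d1 = face d2 <-> fconnect (fun x => rho (alpha x)) d1 d2;
  connected : forall d1 d2,
    connect (fun x y => (y == alpha x) || (y == rho x)) d1 d2
}.

Arguments alpha {_}.
Arguments rho {_}.
Arguments vert {_}.
Arguments edge {_}.
Arguments face {_}.

Definition genus_zero (G : emb_graph) : Prop :=
  (#|vtx G| + #|fac G| = #|edg G| + 2)%N.

Section Models.
Variable G : emb_graph.
Variables (S S' : finType).

(* |eta(sigma)|: number of (primal) edges whose endpoints carry different
   sigma-values (= number of dual edges in eta(sigma)). *)
Definition eta_V (sg : vtx G -> S) : nat :=
  #|[set e : edg G | [exists d : dart G,
      (edge d == e) && (sg (vert d) != sg (vert (alpha d)))]]|.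

(* |eta(sigma')|: number of edges e whose dual edge e* has endpoints (faces)
   carrying different sigma'-values. *)
Definition eta_U (sg' : fac G -> S') : nat :=
  #|[set e : edg G | [exists d : dart G,
      (edge d == e) && (sg' (face d) != sg' (face (alpha d)))]]|.

Definition in_Sigma (sg : vtx G -> S) (sg' : fac G -> S') : bool :=
  [forall e : edg G, ~~ (
     [exists d : dart G, (edge d == e) && (sg (vert d) != sg (vert (alpha d)))]
  && [exists d : dart G, (edge d == e) && (sg' (face d) != sg' (face (alpha d)))])].

Variable R : realType.
Local Open Scope ring_scope.

Definition wP (a b : R) (sg : {ffun vtx G -> S}) (sg' : {ffun fac G -> S'}) : R :=
  if in_Sigma sg sg' then a ^+ eta_U sg' * b ^+ eta_V sg else 0.

Definition lawP (a b : R) (s : {ffun vtx G -> S}) : R :=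
  (\sum_(sg' : {ffun fac G -> S'}) wP a b s sg') /
  (\sum_(sg : {ffun vtx G -> S}) \sum_(sg' : {ffun fac G -> S'}) wP a b sg sg').

Definition delta_edge (T : eqType) (s : vtx G -> T) (e : edg G) : bool :=
  [exists d : dart G, (edge d == e) && (s (vert d) == s (vert (alpha d)))].

Definition wMu (al be : R) (s : {ffun vtx G -> S}) (s' : {ffun vtx G -> S'}) : R :=
  expR (\sum_(e : edg G)
          (delta_edge s e)%:R * (al + be * (delta_edge s' e)%:R)).

Definition lawMu (al be : R) (s : {ffun vtx G -> S}) : R :=
  (\sum_(s' : {ffun vtx G -> S'}) wMu al be s s') /
  (\sum_(t : {ffun vtx G -> S}) \sum_(s' : {ffun vtx G -> S'}) wMu al be t s').

End Models.

(* Both laws come from Fortuin-Kasteleyn expansions.  Summing out the face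
   spins sigma' turns the weight of sigma into a sum over sets [u] of dual
   edges weighted by q'^(number of components of (U, u)); summing out s' turns
   the weight of s into a sum over sets [t] of primal edges weighted by
   q'^(number of components of (V, t)).  Pairing [t] with its dual complement,
   the edge weights agree up to a global constant for the given alpha and beta,
   and the component counts agree as well because on a genus-zero map
   k*(E \ t) + |V| = k(t) + |t| + 1.  The latter holds since
   k(t) + |t| - k*(E \ t) never decreases when an edge [e] is added to [t]
   (if [e] joins two components of [t], the ends of e* are already joined by
   dual edges outside t + e), and Euler's formula gives it the same value
   |V| - 1 at t = set0 and t = setT. *)

From Pilot Require Import Defs.
From mathcomp Require Import all_boot all_order all_algebra finmap fingroup perm.
From mathcomp Require Import complex.
From mathcomp Require Import all_classical all_reals all_analysis.
From mathcomp Require Import zify ring.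
Set Implicit Arguments.
Unset Strict Implicit.
Unset Printing Implicit Defensive.
Import GRing.Theory Num.Theory.

Lemma connect_stable (T : finType) (e : rel T) (a : pred T) :
  (forall u v, e u v -> a u -> a v) -> forall u v, connect e u v -> a u -> a v.
Proof.
move=> stab u v /connectP[p pp ->]; elim: p u pp => //= w p IHp u /andP[euw pw] au.
exact: IHp pw (stab _ _ euw au).
Qed.

Section EdgeSubsets.
Variables (W Ed : finType) (x y : Ed -> W).
Implicit Types (t : {set Ed}) (e : Ed) (u v w : W).

Definition adj t : rel W := fun u v =>
  [exists e in t, ((x e == u) && (y e == v)) || ((x e == v) && (y e == u))].

Lemma adj_sym t : symmetric (adj t).
Proof. by move=> u v; apply/existsP/existsP => -[e He]; exists e; rewrite orbC. Qed.

Lemma connect_adj_sym t : connect_sym (adj t).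
Proof. exact/sym_connect_sym/adj_sym. Qed.

Lemma connect_adj_edge t e : e \in t -> connect (adj t) (x e) (y e).
Proof. by move=> te; apply/connect1/existsP; exists e; rewrite te !eqxx. Qed.

Lemma connect_adj_setU1 t e u v : connect (adj (e |: t)) u v ->
  connect (adj t) u v ||
  ((connect (adj t) u (x e) || connect (adj t) u (y e)) &&
   (connect (adj t) v (x e) || connect (adj t) v (y e))).
Proof.
pose near_e w := connect (adj t) w (x e) || connect (adj t) w (y e).
have near_trans v1 w1 : connect (adj t) v1 w1 -> near_e w1 -> near_e v1.
  by move=> c /orP[] h; rewrite /near_e (connect_trans c h) ?orbT.
move=> cuv.
apply: (@connect_stable _ _ [pred w | connect (adj t) u w || near_e u && near_e w] _ u v cuv);
  last by rewrite /= connect0.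
move=> v1 w1 /existsP[e' /andP[te' ends]] /= hv1.
case/setU1P: te' => [ee' | te'].
  have [nv1 nw1] : near_e v1 /\ near_e w1.
    by rewrite ee' in ends; case/orP: ends => /andP[/eqP <- /eqP <-];
      rewrite /near_e !connect0 !orbT.
  case/orP: hv1 => [cuv1 | /andP[nu _]]; last by rewrite nu nw1 orbT.
  by rewrite (near_trans _ _ cuv1 nv1) nw1 orbT.
have cv1w1 : connect (adj t) v1 w1.
  case/orP: ends => /andP[/eqP <- /eqP <-]; first exact: connect_adj_edge.
  by rewrite connect_adj_sym; exact: connect_adj_edge.
case/orP: hv1 => [cuv1 | /andP[nu nv1]]; first by rewrite (connect_trans cuv1 cv1w1).
by rewrite connect_adj_sym in cv1w1; rewrite (near_trans _ _ cv1w1 nv1) nu orbT.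
Qed.

Definition ncomp t := n_comp (adj t) W.

Lemma ncompE t : ncomp t = #|[set r | roots (adj t) r]|.
Proof. by apply: eq_card => r; rewrite !inE andbT. Qed.

Lemma roots_connect_eq t r1 r2 : roots (adj t) r1 -> roots (adj t) r2 ->
  connect (adj t) r1 r2 -> r1 = r2.
Proof. by move=> /eqP r1r /eqP r2r /(fingraph.rootP (connect_adj_sym t)); rewrite r1r r2r. Qed.

Lemma ncomp_setU1_le t e : ncomp t <= (ncomp (e |: t)).+1.
Proof.
set r0 := fingraph.root (adj t) (x e).
have far r : roots (adj t) r -> r != r0 -> ~~ connect (adj t) r (x e).
  by move=> /eqP rr; apply: contra => /(fingraph.rootP (connect_adj_sym t)) rxe; rewrite /r0 -rxe rr.
have inj : {in [set r | roots (adj t) r] :\ r0 &, injective (fingraph.root (adj (e |: t)))}.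
  move=> r1 r2; rewrite !inE => /andP[n1 rr1] /andP[n2 rr2].
  move=> /(fingraph.rootP (connect_adj_sym _)) /connect_adj_setU1.
  rewrite (negPf (far _ rr1 n1)) (negPf (far _ rr2 n2)) /=.
  case/orP => [|/andP[c1 c2]]; first exact: roots_connect_eq.
  by apply: roots_connect_eq rr1 rr2 _; rewrite (connect_trans c1) // connect_adj_sym.
rewrite !ncompE (cardsD1 r0) inE roots_root ?add1n ?ltnS; last exact: connect_adj_sym.
rewrite -(card_in_imset inj); apply: subset_leq_card.
apply/fintype.subsetP => _ /imsetP[r _ ->]; rewrite inE roots_root //; exact: connect_adj_sym.
Qed.

Lemma ncomp_setU1_connect t e :
  connect (adj t) (x e) (y e) -> ncomp (e |: t) = ncomp t.
Proof.
move=> cxy; apply: eq_n_comp => u v; apply/idP/idP.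
  have to_x w : connect (adj t) w (x e) || connect (adj t) w (y e) -> connect (adj t) w (x e).
    by case/orP => // cwy; rewrite (connect_trans cwy) // connect_adj_sym.
  case/connect_adj_setU1/orP => [//|/andP[/to_x cux /to_x cvx]].
  by rewrite (connect_trans cux) // connect_adj_sym.
apply: connect_sub => u' v' /existsP[e' /andP[te' ends]]; apply/connect1/existsP.
by exists e'; rewrite setU1r.
Qed.

Lemma ncomp_set0 : ncomp finset.set0 = #|W|.
Proof.
have connect0_eq u v : connect (adj finset.set0) u v -> u = v.
  by case/connectP => -[|w p] //= /andP[/existsP[e]]; rewrite inE.
rewrite ncompE -cardsT; apply: eq_card => u; rewrite !inE.
by apply/eqP/esym/connect0_eq/connect_root.
Qed.

Lemma ncomp_le1 t : (forall u v, connect (adj t) u v) -> ncomp t <= 1.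
Proof.
move=> conn; rewrite ncompE; apply/card_le1_eqP => r1 r2 /[!inE] rr1 rr2.
by apply: roots_connect_eq rr2 rr1 _.
Qed.

Definition edge_constant (T : eqType) t (c : W -> T) :=
  [forall e in t, c (x e) == c (y e)].

Lemma edge_constant_connect (T : eqType) t (c : W -> T) u v :
  edge_constant t c -> connect (adj t) u v -> c u = c v.
Proof.
move=> cst cuv; apply/eqP; apply: (@connect_stable _ _ [pred w | c u == c w] _ u v cuv) => //=.
move=> v1 w1 /existsP[e /andP[te ends]] /eqP ->.
have /eqP ce := implyP (forallP cst e) te.
by case/orP: ends => /andP[/eqP <- /eqP <-]; rewrite ce.
Qed.

Lemma card_edge_constant (T : finType) t :
  #|[set c : {ffun W -> T} | edge_constant t c]| = #|T| ^ ncomp t.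
Proof.
pose Rt := [set r | roots (adj t) r].
have rootRt v : fingraph.root (adj t) v \in Rt.
  by rewrite inE roots_root //; exact: connect_adj_sym.
pose extend (f : {ffun {r | r \in Rt} -> T}) : {ffun W -> T} :=
  [ffun v => f (exist (fun r => r \in Rt) _ (rootRt v))].
have extend_inj : injective extend.
  move=> f g /ffunP fg; apply/ffunP => -[r Rr]; have := fg r; rewrite !ffunE.
  have rr : fingraph.root (adj t) r = r by apply/eqP; rewrite inE in Rr.
  by have -> : exist (fun r => r \in Rt) _ (rootRt r) = exist _ r Rr by apply: val_inj.
have -> : [set c : {ffun W -> T} | edge_constant t c] = extend @: [set: {ffun {r | r \in Rt} -> T}].
  apply/setP => c; rewrite inE; apply/idP/imsetP => [cst | [f _ ->]].
    exists [ffun r => c (val r)]; rewrite ?inE //; apply/ffunP => v; rewrite !ffunE /=.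
    exact/(edge_constant_connect cst)/connect_root.
  apply/forallP => e; apply/implyP => te; rewrite !ffunE; apply/eqP; congr (f _).
  by apply: val_inj; apply/(fingraph.rootP (connect_adj_sym t))/connect_adj_edge.
by rewrite card_imset // cardsT card_ffun card_sig ncompE.
Qed.

Local Open Scope ring_scope.

(* Write each factor as (g e true - g e false) [c (x e) = c (y e)] + g e false
   and expand the product over the edges. *)
Lemma FK_expansion (R : comNzRingType) (T : finType) (g : Ed -> bool -> R) :
  \sum_(c : {ffun W -> T}) \prod_e g e (c (x e) == c (y e)) =
  \sum_(t : {set Ed})
    (\prod_e (if e \in t then g e true - g e false else g e false)) * (#|T| ^ ncomp t)%:R.
Proof.
have expand c : \prod_e g e (c (x e) == c (y e)) =
    \sum_(t : {set Ed})
      (\prod_e (if e \in t then g e true - g e false else g e false)) * (edge_constant t c)%:R.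
  rewrite (eq_bigr (fun e => (g e true - g e false) * (c (x e) == c (y e))%:R + g e false));
    last by move=> e _; case: (_ == _); rewrite ?mulr1 ?mulr0 ?add0r ?subrK.
  rewrite bigA_distr; apply: eq_bigr => t _.
  case: (boolP (edge_constant t c)) => [cst | /forallPn[e]]; rewrite /= ?mulr1.
    apply: eq_bigr => e _; case: ifP => // te.
    by rewrite (eqP (implyP (forallP cst e) te)) eqxx mulr1.
  by rewrite negb_imply => /andP[te /negPf ne]; rewrite mulr0 (bigD1 e) //= te ne mulr0 mul0r.
under eq_bigr => c _ do rewrite expand.
rewrite exchange_big /=; apply: eq_bigr => t _; rewrite -mulr_sumr; congr (_ * _).
rewrite -card_edge_constant -sum1_card natr_sum [RHS]big_mkcond /=.
by apply: eq_bigr => c _; rewrite inE; case: (edge_constant t c).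
Qed.

End EdgeSubsets.

Section EmbeddedGraph.
Variable G : emb_graph.
Implicit Types (t : {set edg G}) (e : edg G) (z : dart G).

Lemma edge_surj_eqb e : exists z : dart G, edge z == e.
Proof. by case: (edge_surj e) => z <-; exists z. Qed.

Definition edge_dart e := xchoose (edge_surj_eqb e).

Lemma edge_dartK e : edge (edge_dart e) = e.
Proof. exact/eqP/(xchooseP (edge_surj_eqb e)). Qed.

Lemma edge_dartP z : z = edge_dart (edge z) \/ z = alpha (edge_dart (edge z)).
Proof.
set d := edge_dart (edge z).
have dz : fconnect alpha d z by apply/(edge_fiber _ _).1; rewrite edge_dartK.
have alpha_stable u v : frel alpha u v ->
    (u == d) || (u == alpha d) -> (v == d) || (v == alpha d).
  by move=> /eqP <- /orP[] /eqP ->; rewrite ?alpha_invol eqxx ?orbT.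
have := connect_stable alpha_stable dz; rewrite eqxx => /(_ isT) /orP[] /eqP; by [left | right].
Qed.

Lemma vert_rho z : vert (rho z) = vert z.
Proof. exact/esym/(vert_fiber _ _).2/fconnect1. Qed.

Lemma face_rho z : face (rho z) = face (alpha z).
Proof.
apply/esym/(face_fiber _ _).2.
by rewrite -{2}[z]alpha_invol; apply: (fconnect1 (fun x => rho (alpha x))).
Qed.

Lemma exists_dart_edge (P : pred (dart G)) e : (forall z, P (alpha z) = P z) ->
  [exists z, (edge z == e) && P z] = P (edge_dart e).
Proof.
move=> Palpha; apply/existsP/idP => [[z /andP[/eqP <- Pz]] | Pe].
  by case: (edge_dartP z) => zE; rewrite zE ?Palpha in Pz.
by exists (edge_dart e); rewrite edge_dartK eqxx.
Qed.

Lemma exists_dart_eqE (W : finType) (T : eqType) (f : dart G -> W) (c : W -> T) e :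
  [exists z, (edge z == e) && (c (f z) == c (f (alpha z)))] =
  (c (f (edge_dart e)) == c (f (alpha (edge_dart e)))).
Proof. by rewrite exists_dart_edge // => z; rewrite alpha_invol eq_sym. Qed.

Lemma exists_dart_neqE (W : finType) (T : eqType) (f : dart G -> W) (c : W -> T) e :
  [exists z, (edge z == e) && (c (f z) != c (f (alpha z)))] =
  (c (f (edge_dart e)) != c (f (alpha (edge_dart e)))).
Proof. by rewrite exists_dart_edge // => z; rewrite alpha_invol eq_sym. Qed.

(* With [f := vert], [dadj f t] is the adjacency of the spanning subgraph of
   [G] with edge set [t]; with [f := face], that of the dual graph restricted to
   the duals of [t]. *)
Section DartMaps.
Variables (W : finType) (f : dart G -> W).

Definition dadj : {set edg G} -> rel W :=
  adj (fun e => f (edge_dart e)) (fun e => f (alpha (edge_dart e))).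

Definition dncomp t := ncomp (fun e => f (edge_dart e)) (fun e => f (alpha (edge_dart e))) t.

Lemma connect_dadj_dart t z : edge z \in t -> connect (dadj t) (f z) (f (alpha z)).
Proof.
move=> tz; case: (edge_dartP z) => ->; first exact: connect_adj_edge.
by rewrite alpha_invol connect_adj_sym; exact: connect_adj_edge.
Qed.

Lemma connect_dadj_setT :
  (forall w, exists z, f z = w) ->
  (forall z, f (rho z) = f z \/ f (rho z) = f (alpha z)) ->
  forall u v, connect (dadj [set: edg G]) u v.
Proof.
move=> f_surj f_rho u v; case: (f_surj u) => z1 <-; case: (f_surj v) => z2 <-.
have dart_step z z' : (z' == alpha z) || (z' == rho z) ->
    connect (dadj [set: edg G]) (f z1) (f z) -> connect (dadj [set: edg G]) (f z1) (f z').
  have fz_alpha : connect (dadj [set: edg G]) (f z) (f (alpha z)).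
    by apply: connect_dadj_dart; rewrite inE.
  case/orP=> /eqP -> cz; rewrite (connect_trans cz) //.
  by case: (f_rho z) => ->.
by have := connect_stable dart_step (Defs.connected z1 z2); apply; apply: connect0.
Qed.

Lemma dncomp_setU1_le t e : dncomp t <= (dncomp (e |: t)).+1.
Proof. exact: ncomp_setU1_le. Qed.

Lemma dncomp_setU1_connect t e :
  connect (dadj t) (f (edge_dart e)) (f (alpha (edge_dart e))) ->
  dncomp (e |: t) = dncomp t.
Proof. exact: ncomp_setU1_connect. Qed.

End DartMaps.

(* Around the faces in [X], the boundary of [U] is crossed outwards as often as
   inwards, because {z | U (vert z) && X (face z)} has the same preimage under
   [rho] as {z | U (vert (alpha z)) && X (face z)} under [alpha]. *)
Lemma card_boundary_darts (U : pred (vtx G)) (X : pred (fac G)) :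
  #|[set z | U (vert z) && ~~ U (vert (alpha z)) && X (face z)]| =
  #|[set z | ~~ U (vert z) && U (vert (alpha z)) && X (face z)]|.
Proof.
pose A := [set z | U (vert z) && X (face z)].
pose B := [set z | U (vert (alpha z)) && X (face z)].
have cardAB : #|A| = #|B|.
  rewrite -(card_preimset A (@perm_inj _ rho)) -(card_preimset B (@perm_inj _ alpha)).
  by apply: eq_card => z; rewrite !inE vert_rho face_rho alpha_invol.
have -> : [set z | U (vert z) && ~~ U (vert (alpha z)) && X (face z)] = A :\: B.
  by apply/setP => z; rewrite !inE; case: (U _); case: (U _); case: (X _).
have -> : [set z | ~~ U (vert z) && U (vert (alpha z)) && X (face z)] = B :\: A.
  by apply/setP => z; rewrite !inE; case: (U _); case: (U _); case: (X _).
have := cardsID B A; have := cardsID A B; rewrite finset.setIC cardAB; lia.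
Qed.

(* Otherwise the darts leaving the component of the first endpoint in faces of
   the dual component of [face (edge_dart e)] would outnumber the entering ones:
   [alpha] maps the latter injectively to the former, missing [edge_dart e]. *)
Lemma connect_dual_complement t e :
  ~~ connect (dadj vert t) (vert (edge_dart e)) (vert (alpha (edge_dart e))) ->
  connect (dadj face (~: (e |: t))) (face (edge_dart e)) (face (alpha (edge_dart e))).
Proof.
move=> not_cv; apply/negPn/negP => not_cf.
set d := edge_dart e in not_cv not_cf.
pose U v := connect (dadj vert t) (vert d) v.
pose X f := connect (dadj face (~: (e |: t))) (face d) f.
pose S1 := [set z | U (vert z) && ~~ U (vert (alpha z)) && X (face z)].
pose S2 := [set z | ~~ U (vert z) && U (vert (alpha z)) && X (face z)].
have S1d : d \in S1 by rewrite !inE /U /X !connect0 not_cv.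
suff : #|S2| < #|S1| by rewrite card_boundary_darts ltnn.
rewrite (cardsD1 d S1) S1d -(card_imset _ (@perm_inj _ alpha)); apply: subset_leq_card.
apply/fintype.subsetP => _ /imsetP[z /[!inE] /andP[/andP[nUz Uaz] Xz] ->].
have not_tz : edge z \notin t.
  apply: contra nUz => tz; apply: connect_trans Uaz _.
  by rewrite connect_adj_sym; exact: connect_dadj_dart.
have z_neq_ad : z != alpha d by apply: contraNneq not_cf => zE; rewrite zE in Xz.
have z_neq_d : z != d by apply: contraNneq nUz => ->; apply: connect0.
have ez : edge z != e.
  apply/eqP => ze; case: (edge_dartP z); rewrite ze -/d => zE.
    by rewrite zE eqxx in z_neq_d.
  by rewrite zE eqxx in z_neq_ad.
have Xaz : X (face (alpha z)).
  by apply: connect_trans Xz _; apply: connect_dadj_dart; rewrite !inE negb_or ez.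
rewrite alpha_invol Uaz nUz Xaz !andbT /=.
by apply: contraNneq z_neq_ad => <-; rewrite alpha_invol.
Qed.

Lemma dncomp_setU1 t e : e \notin t ->
  dncomp vert t + dncomp face (~: (e |: t)) <= dncomp vert (e |: t) + dncomp face (~: t) + 1.
Proof.
move=> te.
have -> : ~: t = e |: ~: (e |: t).
  by apply/setP => z; rewrite !inE negb_or; case: eqVneq => // ->; rewrite te.
case: (boolP (connect (dadj vert t) (vert (edge_dart e)) (vert (alpha (edge_dart e)))))
  => [cv | /connect_dual_complement cf].
  by rewrite (dncomp_setU1_connect cv); have := dncomp_setU1_le face (~: (e |: t)) e; lia.
by rewrite (dncomp_setU1_connect cf); have := dncomp_setU1_le vert t e; lia.
Qed.

Definition euler_defect t : int :=
  (dncomp vert t)%:Z + (#|t|)%:Z - (dncomp face (~: t))%:Z.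

Lemma euler_defect_setU1 t e : (euler_defect t <= euler_defect (e |: t))%R.
Proof.
have [te | nte] := boolP (e \in t); first by rewrite (finset.setUidPr _) // finset.sub1set.
by have := dncomp_setU1 nte; rewrite /euler_defect cardsU1 nte; lia.
Qed.

Lemma euler_defect_subset t1 t2 : t1 \subset t2 ->
  (euler_defect t1 <= euler_defect t2)%R.
Proof.
move: {2}#|t2 :\: t1| (erefl #|t2 :\: t1|) => n; elim: n t1 => [|n IHn] t1 hn sub.
  suff -> : t1 = t2 by [].
  by apply/eqP; rewrite finset.eqEsubset sub -finset.setD_eq0 -cards_eq0 hn.
have [e] : exists e, e \in t2 :\: t1 by apply/finset.set0Pn; rewrite -cards_eq0 hn.
rewrite inE => /andP[nt1e t2e].
apply: Order.POrderTheory.le_trans (euler_defect_setU1 t1 e) (IHn _ _ _); last first.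
  by rewrite finset.subUset finset.sub1set t2e sub.
have -> : t2 :\: (e |: t1) = (t2 :\: t1) :\ e.
  by apply/setP => z; rewrite !inE negb_or andbA.
by move: hn; rewrite (cardsD1 e) inE nt1e t2e => -[].
Qed.

Lemma genus_zero_duality t : genus_zero G ->
  dncomp face (~: t) + #|vtx G| = dncomp vert t + #|t| + 1.
Proof.
rewrite /genus_zero => euler.
have := euler_defect_subset (finset.sub0set t).
have := euler_defect_subset (finset.subsetT t).
rewrite /euler_defect finset.setC0 finset.setCT cards0 cardsT /dncomp !ncomp_set0.
have := ncomp_le1 (connect_dadj_setT (@vert_surj G) (fun z => or_introl (vert_rho z))).
have := ncomp_le1 (connect_dadj_setT (@face_surj G) (fun z => or_intror (face_rho z))).
lia.
Qed.

End EmbeddedGraph.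

Local Open Scope ring_scope.

Lemma normalized_scale (T : finType) (F : fieldType) (f g : T -> F) (k : F) s :
  k != 0 -> (forall x, f x = k * g x) -> f s / \sum_x f x = g s / \sum_x g x.
Proof.
move=> k0 fg; rewrite (eq_bigr _ (fun x _ => fg x)) -mulr_sumr fg invfM mulrACA.
by rewrite mulfV // mul1r.
Qed.

Lemma exprn_card_set (T : finType) (R : comNzRingType) (z : R) (P : pred T) :
  z ^+ #|[set x | P x]| = \prod_x (if P x then z else 1).
Proof. by rewrite -prodr_const big_mkcond; apply: eq_bigr => x _; rewrite inE. Qed.

Section Weights.
Variables (G : emb_graph) (S S' : finType) (R : realType) (a b : R).
Implicit Types (e : edg G) (t : {set edg G}).

Definition wP_edge (s : vtx G -> S) e (same' : bool) : R :=
  if s (vert (edge_dart e)) == s (vert (alpha (edge_dart e)))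
  then (if same' then 1 else a) else (if same' then b else 0).

Lemma wP_prod (s : {ffun vtx G -> S}) (s' : {ffun fac G -> S'}) :
  wP a b s s' =
  \prod_e wP_edge s e (s' (face (edge_dart e)) == s' (face (alpha (edge_dart e)))).
Proof.
rewrite /wP /in_Sigma /eta_U /eta_V.
case: ifP => [inS | /negbT/forallPn[e]]; last first.
  rewrite negbK !exists_dart_neqE => /andP[/negPf ne /negPf ne'].
  by rewrite (bigD1 e) //= /wP_edge ne ne' mul0r.
rewrite !exprn_card_set -big_split /=; apply: eq_bigr => e _.
have := forallP inS e; rewrite !exists_dart_neqE /wP_edge.
by case: (_ == _); case: (_ == _); rewrite ?mulr1 ?mul1r.
Qed.

Definition wMu_edge (al be : R) (s : vtx G -> S) e (same' : bool) : R :=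
  if s (vert (edge_dart e)) == s (vert (alpha (edge_dart e)))
  then expR al * (if same' then expR be else 1) else 1.

Lemma wMu_prod (al be : R) (s : {ffun vtx G -> S}) (s' : {ffun vtx G -> S'}) :
  wMu al be s s' =
  \prod_e wMu_edge al be s e (s' (vert (edge_dart e)) == s' (vert (alpha (edge_dart e)))).
Proof.
rewrite /wMu expR_sum; apply: eq_bigr => e _.
rewrite /delta_edge !(exists_dart_eqE vert) /wMu_edge.
case: (_ == _); last by rewrite mul0r expR0.
by rewrite mul1r expRD; case: (_ == _) => /=; rewrite ?mulr0 ?expR0 mulr1.
Qed.

(* This per-edge identity is what fixes the values of [al] and [be]. *)
Lemma wMu_wP_edge (al be : R) (s : vtx G -> S) e (inT : bool) :
  b != 0 -> 1 - a != 0 ->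
  expR al = (1 - a) / b -> expR be = 1 + #|S'|%:R * a / (1 - a) ->
  b * (if inT then wMu_edge al be s e true - wMu_edge al be s e false
       else wMu_edge al be s e false) =
  (if inT then #|S'|%:R else 1) *
  (if ~~ inT then wP_edge s e true - wP_edge s e false else wP_edge s e false).
Proof.
move=> b0 a1 eal ebe; rewrite /wMu_edge /wP_edge eal ebe.
case: (_ == _); case: inT => /=.
- by field; rewrite b0 a1.
- by field; rewrite b0.
- by rewrite subrr !mulr0.
- by rewrite subr0 mulr1 mul1r.
Qed.

Lemma sum_wP_wMu (al be : R) (s : {ffun vtx G -> S}) :
  genus_zero G -> b != 0 -> 1 - a != 0 ->
  expR al = (1 - a) / b -> expR be = 1 + #|S'|%:R * a / (1 - a) ->
  #|S'|%:R ^+ #|vtx G| * \sum_(s' : {ffun fac G -> S'}) wP a b s s' =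
  #|S'|%:R * b ^+ #|edg G| * \sum_(s' : {ffun vtx G -> S'}) wMu al be s s'.
Proof.
move=> genus0 b0 a1 eal ebe.
under eq_bigr do rewrite wP_prod.
under [in RHS]eq_bigr do rewrite wMu_prod.
rewrite !FK_expansion !mulr_sumr (reindex_inj (@finset.setC_inj _)) /=.
apply: eq_bigr => t _; rewrite !natrX.
set q : R := #|S'|%:R.
set PL := \prod_e _; set PR := \prod_e _.
have PRL : b ^+ #|edg G| * PR = q ^+ #|t| * PL.
  have : \prod_e (b * (if e \in t then wMu_edge al be s e true - wMu_edge al be s e false
                       else wMu_edge al be s e false)) =
         \prod_e ((if e \in t then q else 1) *
                  (if e \in ~: t then wP_edge s e true - wP_edge s e false
                   else wP_edge s e false)).
    by apply: eq_bigr => e _; rewrite wMu_wP_edge // inE.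
  by rewrite !big_split /= -big_mkcond /= !prodr_const => ->.
rewrite -/(dncomp face (~: t)) -/(dncomp vert t).
rewrite [LHS](_ : _ = q ^+ (dncomp face (~: t) + #|vtx G|) * PL); last by rewrite exprD; ring.
rewrite genus_zero_duality // !exprD expr1.
by transitivity (q * q ^+ dncomp vert t * (q ^+ #|t| * PL)); [ring | rewrite -PRL; ring].
Qed.

Lemma lawP_lawMu (al be : R) (s : {ffun vtx G -> S}) :
  (0 < #|S'|)%N -> genus_zero G -> 0 < a < 1 -> 0 < b ->
  expR al = (1 - a) / b -> expR be = 1 + #|S'|%:R * a / (1 - a) ->
  lawP S' a b s = lawMu S' al be s.
Proof.
move=> S'0 genus0 /andP[a0 a1] b0 eal ebe.
have q0 : #|S'|%:R != 0 :> R by rewrite pnatr_eq0 -lt0n.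
have b0' : b != 0 by rewrite lt0r_neq0.
have a1' : 1 - a != 0 by rewrite lt0r_neq0 // subr_gt0.
apply: (normalized_scale (k := #|S'|%:R * b ^+ #|edg G| / #|S'|%:R ^+ #|vtx G|)) => [|t].
  by rewrite !mulf_neq0 ?invr_eq0 ?expf_neq0.
apply: (mulfI (expf_neq0 #|vtx G| q0)); rewrite (sum_wP_wMu t genus0 b0' a1' eal ebe).
by field; rewrite expf_neq0.
Qed.

End Weights.

Theorem theorem3p2 (R : realType) (G : emb_graph)
  (Q Q' : {fset R[i]})
  (HQ : forall x, x \in Q -> - x \in Q) (HQ' : forall x, x \in Q' -> - x \in Q')
  (HQ0 : (0 < #|` Q|)%N) (HQ'0 : (0 < #|` Q'|)%N)
  (a b : R) (ha : 0 < a < 1) (hb : 0 < b <= 1) :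
  genus_zero G ->
  let al := ln ((1 - a) / b) in
  let be := ln (1 + (#|` Q'|)%:R * a / (1 - a)) in
  forall s : {ffun vtx G -> Q},
    @lawP G Q Q' R a b s = @lawMu G Q Q' R al be s.
Proof.
move=> genus0 al be s; have [a0 a1] := andP ha; have [b0 _] := andP hb.
have cardQ' : #|` Q'| = #|fset_sub_type Q'| by rewrite cardfE.
apply: lawP_lawMu; rewrite -?cardQ' //.
  by rewrite /al lnK // posrE divr_gt0 // subr_gt0.
by rewrite /be lnK // posrE addr_gt0 // divr_gt0 ?mulr_gt0 ?ltr0n // subr_gt0.
Qed.
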